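(* Let $O$ be the partial P-matroid USO of a P-matroid extension on $E_{2n}\cup\{q\}$, and let $F$ be the set of maximal unoriented faces, i.e., the faces $f_v=\{w: w_i=v_i \text{ for all } i \text{ with } O(v)_i\neq0\}$, $v\in\{0,1\}^n$ (these are pairwise vertex-disjoint or equal, and their half-edges are exactly the unoriented half-edges of $O$). For each $f\in F$ choose an arbitrary unique sink orientation $U_f$ of $f$ (viewed as a cube of dimension equal to the number of dimensions spanned by $f$). Let $O'(v)_i=U_f(v)_i$ if $v\in f\in F$ and $i$ is spanned by $f$, and $O'(v)_i=O(v)_i$ otherwise. Then $O'$ is a unique sink orientation of $Q_n$.
   Context: Oriented matroids are given by circuits $X\in\{-,0,+\}^E$ with support $\underline X$; bases are inclusion-maximal subsets containing no circuit support; for a basis $B$ and $e\notin B$ the fundamental circuit $C(B,e)$ is the unique circuit $X$ with $X_e=+$, $\underline X\subseteq B\cup\{e\}$. $S=\{s_1,\dots,s_n\}$, $T=\{t_1,\dots,t_n\}$, $E_{2n}=S\cup T$, $q\notin E_{2n}$; complementary sets contain no pair $\{s_i,t_i\}$; a circuit is sign-reversing if $X_{s_i}=-X_{t_i}$ whenever $\{s_i,t_i\}\subseteq\underline X$; a P-matroid is an oriented matroid on $E_{2n}$ in which $S$ is a basis and no circuit is sign-reversing; a P-matroid extension is an oriented matroid on $E_{2n}\cup\{q\}$ whose circuits with $X_q=0$ restrict to exactly the circuits of a P-matroid. In a P-matroid extension every complementary $n$-set is a basis. A face of $Q_n$ is a set $\{w\in\{0,1\}^n: w_j=u_j\ \forall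 j\notin I\}$, spanning the dimensions in $I$. For $v\in\{0,1\}^n$, $B(v)=\{s_i:v_i=0\}\cup\{t_i:v_i=1\}$. The partial P-matroid USO is $O:\{0,1\}^n\to\{-,0,+\}^n$ with, for $C=C(B(v),q)$ and $e=s_i$ if $v_i=0$, $e=t_i$ if $v_i=1$: $O(v)_i=+$ if $C_e=-$, $-$ if $C_e=+$, $0$ if $C_e=0$ ($+$ outgoing, $-$ incoming, $0$ unoriented). A unique sink orientation of a cube is an assignment of $\pm$ to every half-edge such that every non-empty face has exactly one vertex whose half-edges in all dimensions spanned by the face are incoming. *)

From mathcomp Require Import all_boot.
Set Implicit Arguments. Unset Strict Implicit. Unset Printing Implicit Defensive.

(* Signs: Some true = +, Some false = -, None = 0. *)
Definition sign := option bool.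
Definition sopp (s : sign) : sign := omap negb s.

Section OM.
Variable E : finType.
Definition svec := {ffun E -> sign}.

Definition negv (X : svec) : svec := [ffun e => sopp (X e)].
Definition supp (X : svec) : {set E} := [set e | X e != None].

Definition is_OM (C : {set svec}) : Prop :=
  [/\ (forall X, X \in C -> supp X != set0),
      (forall X, X \in C -> negv X \in C),
      (forall X Y, X \in C -> Y \in C -> supp X \subset supp Y ->
                   X = Y \/ X = negv Y)
    & (forall X Y e, X \in C -> Y \in C -> X <> negv Y ->
         X e = Some true -> Y e = Some false ->
         exists2 Z, Z \in C &
           [/\ Z e = None,
               (forall f, Z f = Some true -> X f = Some true \/ Y f = Some true)
             & (forall f, Z f = Some false -> X f = Some false \/ Y f = Some false)])].

Definition indep (C : {set svec}) (B : {set E}) : bool :=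
  [forall X in C, ~~ (supp X \subset B)].

Definition is_basis (C : {set svec}) (B : {set E}) : bool :=
  indep C B && [forall B' : {set E}, (B \proper B') ==> ~~ indep C B'].

(* Fundamental circuit C(B,e): the (unique) circuit X with X_e = + and
   supp X included in B + e (zero vector if none exists). *)
Definition fund_circ (C : {set svec}) (B : {set E}) (e : E) : svec :=
  odflt [ffun => None]
    [pick X in C | (X e == Some true) && (supp X \subset e |: B)].
End OM.

(* E_{2n}: (false,i) = s_i, (true,i) = t_i.  E_{2n} + {q}: q = None. *)
Definition E2 (n : nat) := (bool * 'I_n)%type.
Definition Eq (n : nat) := option (E2 n).

Definition Sset (n : nat) : {set E2 n} := [set (false, i) | i : 'I_n].

Definition sign_reversing (n : nat) (X : svec (E2 n)) : Prop :=
  forall i : 'I_n, (false, i) \in supp X -> (true, i) \in supp X ->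
    X (false, i) = sopp (X (true, i)).

Definition is_P_matroid (n : nat) (C : {set svec (E2 n)}) : Prop :=
  [/\ is_OM C, is_basis C (Sset n) & forall X, X \in C -> ~ sign_reversing X].

Definition deletion_q (n : nat) (C : {set svec (Eq n)}) : {set svec (E2 n)} :=
  [set [ffun e : E2 n => (X : svec (Eq n)) (Some e)] | X in C & (X : svec (Eq n)) None == None].

Definition is_P_matroid_extension (n : nat) (C : {set svec (Eq n)}) : Prop :=
  is_OM C /\ is_P_matroid (deletion_q C).

Definition vertex (n : nat) := {ffun 'I_n -> bool}.

Definition Bv (n : nat) (v : vertex n) : {set Eq n} :=
  [set Some (v i, i) | i : 'I_n].

(* Partial P-matroid USO: Some true = outgoing, Some false = incoming,
   None = unoriented. *)
Definition PUSO (n : nat) (C : {set svec (Eq n)}) (v : vertex n) (i : 'I_n) : sign :=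
  sopp (fund_circ C (Bv v) None (Some (v i, i))).

Definition face (n : nat) (I : {set 'I_n}) (u : vertex n) : {set vertex n} :=
  [set w : vertex n | [forall j, (j \notin I) ==> (w j == u j)]].

(* A (total) orientation: ori v i = true means outgoing, false incoming. *)
Definition sinks_in (n : nat) (ori : vertex n -> 'I_n -> bool)
  (J : {set 'I_n}) (w : vertex n) : {set vertex n} :=
  [set x in face J w | [forall i in J, ~~ ori x i]].

Definition is_USO_on (n : nat) (I : {set 'I_n}) (u : vertex n)
  (ori : vertex n -> 'I_n -> bool) : Prop :=
  forall (J : {set 'I_n}) (w : vertex n), J \subset I -> w \in face I u ->
    #|sinks_in ori J w| = 1.

Definition is_USO (n : nat) (ori : vertex n -> 'I_n -> bool) : Prop :=
  forall (J : {set 'I_n}) (w : vertex n), #|sinks_in ori J w| = 1.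

Definition unor_dims (n : nat) (C : {set svec (Eq n)}) (v : vertex n) : {set 'I_n} :=
  [set i | PUSO C v i == None].
Definition max_unor_face (n : nat) (C : {set svec (Eq n)}) (v : vertex n) : {set vertex n} :=
  face (unor_dims C v) v.

Definition completed (n : nat) (C : {set svec (Eq n)})
  (U : {set vertex n} -> vertex n -> 'I_n -> bool) (v : vertex n) (i : 'I_n) : bool :=
  match PUSO C v i with
  | Some b => b
  | None => U (max_unor_face C v) v i
  end.

(* By the Szabo-Welzl criterion, an orientation is a USO as soon as any two
   distinct vertices v, w have a coordinate i with v_i <> w_i in which their
   orientations differ; conversely every USO of a face has this property,
   because flipping dimensions preserves USOs and flipping the outgoing
   dimensions of v would otherwise make v and w two sinks of the face they span.
   For O' and v <> w: if C(B(v),q) = C(B(w),q), every coordinate in which v and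
   w differ is unoriented at both, so they lie in one maximal unoriented face
   and the chosen USO of that face separates them.  Otherwise both circuits
   exist, since pivoting along a cube edge with a fundamental circuit of the
   P-matroid shows that the existence of C(B(v),q) does not depend on v.
   Eliminating q between C(B(v),q) and -C(B(w),q) then gives a circuit of the
   P-matroid, and a pair {s_i, t_i} on which it is not sign-reversing is a
   coordinate where O(v) and O(w) are nonzero and opposite. *)

From mathcomp Require Import all_boot.
Set Implicit Arguments. Unset Strict Implicit. Unset Printing Implicit Defensive.

Section Cube.
Variable n : nat.
Implicit Types (I J K : {set 'I_n}) (u v w x y : vertex n)
  (ori : vertex n -> 'I_n -> bool).

Lemma faceP I u x : reflect (forall j, j \notin I -> x j = u j) (x \in face I u).
Proof.
rewrite inE; apply: (iffP forallP) => [xu j jI | xu j].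
  by apply/eqP; move/implyP: (xu j); apply.
by apply/implyP => /xu ->.
Qed.

Lemma face_id I u : u \in face I u.
Proof. by apply/faceP. Qed.

Lemma face_eq I u w : w \in face I u -> face I w = face I u.
Proof.
by move/faceP => wu; apply/setP => x; apply/faceP/faceP => xf j jI; rewrite xf ?wu.
Qed.

Definition flipv K w : vertex n := [ffun i => w i (+) (i \in K)].

Lemma flipvE K w i : flipv K w i = w i (+) (i \in K).
Proof. by rewrite ffunE. Qed.

Lemma flipvK K : involutive (flipv K).
Proof. by move=> w; apply/ffunP => i; rewrite !flipvE -addbA addbb addbF. Qed.

Lemma flip_connected (P : vertex n -> Prop) v0 :
  P v0 -> (forall v i, P v -> P (flipv [set i] v)) -> forall w, P w.
Proof.
move=> P0 Pflip w; have [m] := ubnP #|[set i | w i != v0 i]|.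
elim: m w => // m IHm w; case: (set_0Vmem [set i | w i != v0 i]) => [/setP d0 _|].
  suff -> : w = v0 by [].
  by apply/ffunP => i; apply/eqP; move: (d0 i); rewrite !inE => /negbFE.
move=> [i]; rewrite inE => wi lt; rewrite -(flipvK [set i] w); apply/Pflip/IHm.
have -> : [set j | flipv [set i] w j != v0 j] = [set j | w j != v0 j] :\ i.
  apply/setP => j; rewrite !inE flipvE in_set1.
  case: (eqVneq j i) => [-> | _] /=; last by rewrite addbF.
  by rewrite addbT; case: (w i) (v0 i) wi => [] [].
by move: lt; rewrite (cardsD1 i) inE wi.
Qed.

Lemma face_split J k w : k \in J ->
  face J w = face (J :\ k) w :|: face (J :\ k) (flipv [set k] w).
Proof.
move=> kJ; apply/setP => x; rewrite in_setU.
apply/faceP/orP => [xw | [] /faceP xw j jJ]; last 2 first.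
- by rewrite xw // inE negb_and jJ orbT.
- have jk : j != k by apply: contraNneq jJ => ->.
  by rewrite xw ?flipvE ?in_set1 ?(negbTE jk) ?addbF // inE negb_and jJ orbT.
have xwj j : j != k -> j \notin J :\ k -> x j = w j.
  by move=> jk; rewrite !inE jk /=; apply: xw.
case: (eqVneq (x k) (w k)) => xk; [left | right]; apply/faceP => j;
  case: (eqVneq j k) => [-> _ | jk]; rewrite ?flipvE ?in_set1 ?eqxx ?(negbTE jk) //.
- exact: xwj.
- by rewrite addbT; case: (x k) (w k) xk => [] [].
- by rewrite addbF; apply: xwj.
Qed.

Definition separates ori v w := exists2 i, v i != w i & ori v i != ori w i.

Lemma is_USO_separating ori :
  (forall v w, v != w -> separates ori v w) -> is_USO ori.
Proof.
move=> sep J w; pose A := face J w.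
pose out x := [set i in J | ori x i].
have out_inj : {in A &, injective out}.
  move=> x y /faceP xA /faceP yA /setP exy; apply/eqP; apply: contraT => /sep [i].
  have [iJ | /[dup] /xA -> /yA -> /eqP //] := boolP (i \in J).
  by move: (exy i); rewrite !inE iJ /= => ->; rewrite eqxx.
have out_sub : out @: A \subset powerset J.
  apply/subsetP => _ /imsetP [x _ ->]; rewrite powersetE.
  by apply/subsetP => i; rewrite inE => /andP [].
have powerset_le : #|powerset J| <= #|A|.
  have flip_inj : injective (flipv^~ w).
    move=> K K' /ffunP eKK'; apply/setP => i.
    by apply: (@addbI (w i)); move: (eKK' i); rewrite !flipvE.
  rewrite -(card_imset _ flip_inj); apply/subset_leq_card/subsetP.
  move=> _ /imsetP [K + ->]; rewrite powersetE => /subsetP KJ.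
  apply/faceP => j jJ; rewrite flipvE (contraNF (KJ j)) ?addbF //.
have /imsetP [x0 x0A out0] : set0 \in out @: A.
  suff -> : out @: A = powerset J by rewrite powersetE sub0set.
  by apply/eqP; rewrite eqEcard out_sub (card_in_imset out_inj).
suff -> : sinks_in ori J w = [set x0] by rewrite cards1.
apply/setP => x; rewrite inE -/A in_set1; apply/andP/eqP => [[xA sx] | ->].
  apply: (out_inj x x0) => //; rewrite -out0; apply/setP => i; rewrite !inE.
  by have /implyP := forallP sx i; case: (i \in J) => // /(_ isT) /negbTE.
split => //; apply/forall_inP => i iJ.
by move/setP: out0 => /(_ i); rewrite !inE iJ /= => <-.
Qed.

Lemma in_sinks ori J w x :
  (x \in sinks_in ori J w) = (x \in face J w) && [forall i in J, ~~ ori x i].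
Proof. by rewrite inE. Qed.

Lemma eq_sinks_in ori1 ori2 J w :
  (forall x i, i \in J -> ori1 x i = ori2 x i) ->
  sinks_in ori1 J w = sinks_in ori2 J w.
Proof.
move=> e12; apply/setP => x; rewrite !inE; congr (_ && _).
by apply: eq_forallb => i; case: (boolP (i \in J)) => //= /e12 ->.
Qed.

Lemma sinks_in_split ori J k w : k \in J ->
  sinks_in ori J w =
  [set x in sinks_in ori (J :\ k) w :|: sinks_in ori (J :\ k) (flipv [set k] w)
     | ~~ ori x k].
Proof.
move=> kJ; apply/setP => x; rewrite inE in_setU !in_sinks -andb_orl -in_setU.
rewrite -face_split // -andbA; congr (_ && _).
apply/forall_inP/andP => [sx | [/forall_inP sx sxk] i iJ].
  by split; [apply/forall_inP => i /setD1P [] _ /sx | apply: sx].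
by case: (eqVneq i k) => [-> // | ik]; apply: sx; rewrite !inE ik.
Qed.

Definition flipo K ori v i := ori v i (+) (i \in K).

Lemma USO_on_flip1 I u ori k :
  is_USO_on I u ori -> is_USO_on I u (flipo [set k] ori).
Proof.
move=> uso J w JI wI.
have [kJ | kJ] := boolP (k \in J); last first.
  rewrite (@eq_sinks_in _ ori) ?uso // => x i iJ.
  have ik : i != k by apply: contraNneq kJ => <-.
  by rewrite /flipo in_set1 (negbTE ik) addbF.
have JkI : J :\ k \subset I := subset_trans (subD1set J k) JI.
have wkI : flipv [set k] w \in face I u.
  apply/faceP => j jI; move/faceP: wI => <- //; rewrite flipvE in_set1.
  by case: eqP jI => [-> /negP[] | _ _]; rewrite ?addbF // (subsetP JI).
pose H := sinks_in ori (J :\ k) w :|: sinks_in ori (J :\ k) (flipv [set k] w).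
have cardH : #|H| = 2.
  rewrite cardsU (uso _ _ JkI wI) (uso _ _ JkI wkI).
  suff -> : sinks_in ori (J :\ k) w :&: sinks_in ori (J :\ k) (flipv [set k] w) = set0.
    by rewrite cards0.
  apply/setP => x; rewrite in_setI !in_sinks in_set0.
  apply/negbTE/negP => /andP [/andP [/faceP /(_ k) xw _] /andP [/faceP /(_ k) xwk _]].
  have kJk : k \notin J :\ k by rewrite setD11.
  by move: (xwk kJk); rewrite (xw kJk) flipvE set11 addbT; case: (w k).
have sinks_ori : sinks_in ori J w = [set x in H | ~~ ori x k].
  exact: sinks_in_split.
have sinks_flip : sinks_in (flipo [set k] ori) J w = [set x in H | ori x k].
  rewrite (sinks_in_split _ _ kJ) !(@eq_sinks_in (flipo [set k] ori) ori); first last.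
  - by move=> x i; rewrite /flipo in_set1 => /setD1P [/negbTE -> _]; rewrite addbF.
  - by move=> x i; rewrite /flipo in_set1 => /setD1P [/negbTE -> _]; rewrite addbF.
  by apply/setP => x; rewrite !inE /flipo in_set1 eqxx addbT negbK.
have : #|[set x in H | ori x k]| + #|[set x in H | ~~ ori x k]| = 2.
  rewrite -cardH -(cardID [pred x | ori x k] H).
  by congr (_ + _); apply: eq_card => x; rewrite !inE andbC.
by rewrite sinks_flip -sinks_ori uso // addn1 => -[].
Qed.

Lemma eq_USO_on I u ori1 ori2 :
  ori1 =2 ori2 -> is_USO_on I u ori1 -> is_USO_on I u ori2.
Proof.
by move=> e12 uso J w JI wI; rewrite -(eq_sinks_in w (fun x i _ => e12 x i)) uso.
Qed.

Lemma USO_on_flip I u ori K : is_USO_on I u ori -> is_USO_on I u (flipo K ori).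
Proof.
move=> uso; have [m] := ubnP #|K|; elim: m K => // m IHm K.
have [-> _ | [k kK] ltK] := set_0Vmem K.
  by apply: eq_USO_on uso => v i; rewrite /flipo in_set0 addbF.
apply: (@eq_USO_on _ _ (flipo [set k] (flipo (K :\ k) ori))).
  move=> v i; rewrite /flipo -addbA in_setD1 in_set1.
  by case: (eqVneq i k) => [-> | _]; rewrite ?kK ?addbF.
by apply/USO_on_flip1/IHm; move: ltK; rewrite (cardsD1 k K) kK add1n ltnS.
Qed.

Lemma USO_on_separates I u ori x y : is_USO_on I u ori ->
  x \in face I u -> y \in face I u -> x != y -> separates ori x y.
Proof.
move=> uso xI yI xy.
have [i /andP [] | same] := pickP (fun i => (x i != y i) && (ori x i != ori y i)).
  by exists i.
pose J := [set i | x i != y i]; pose K := [set i in J | ori x i].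
have JI : J \subset I.
  apply/subsetP => i; rewrite inE; apply: contraR => iI.
  by move/faceP: xI => -> //; move/faceP: yI => -> //.
have sinks_xy : [set x; y] \subset sinks_in (flipo K ori) J x.
  have yJ : y \in face J x by apply/faceP => j; rewrite inE negbK => /eqP.
  have oyx i : i \in J -> ori y i = ori x i.
    by rewrite inE => xyi; move: (same i); rewrite xyi => /negbFE/eqP.
  by apply/subsetP => z; rewrite in_set2 => /orP [] /eqP ->;
    rewrite in_sinks ?face_id ?yJ //=;
    apply/forall_inP => i iJ; rewrite /flipo ?oyx // in_set iJ addbb.
have := subset_leq_card sinks_xy.
by rewrite cards2 xy (USO_on_flip K uso JI xI).
Qed.
End Cube.

Section Circuits.
Variables (E : finType) (C : {set svec E}).
Hypothesis C_OM : is_OM C.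
Implicit Types (X Y Z : svec E) (e f : E).

Lemma soppK : involutive sopp.
Proof. by case=> [[]|]. Qed.

Lemma sopp_eq_sym (s t : sign) : (s == sopp t) = (t == sopp s).
Proof. by case: s t => [[]|] [[]|]. Qed.

Lemma negvE X e : negv X e = sopp (X e).
Proof. by rewrite ffunE. Qed.

Lemma negvK : involutive (@negv E).
Proof. by move=> X; apply/ffunP => e; rewrite !negvE soppK. Qed.

Lemma supp_negv X : supp (negv X) = supp X.
Proof. by apply/setP => e; rewrite !inE negvE; case: (X e). Qed.

Lemma circuit_signed X e s : X \in C -> e \in supp X ->
  exists2 X', X' \in C & X' e = Some s /\ supp X' = supp X.
Proof.
case: C_OM => _ C_neg _ _ XC; rewrite inE; case Xe: (X e) => [b|] // _.
have [<- | bs] := eqVneq b s; first by exists X.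
exists (negv X); first exact: C_neg.
by rewrite negvE Xe supp_negv; case: b s bs {Xe} => [] [].
Qed.

Lemma circuit_elim X Y e : X \in C -> Y \in C -> X <> negv Y ->
  X e = Some true -> Y e = Some false ->
  exists2 Z, Z \in C &
    Z e = None /\ forall f b, Z f = Some b -> X f = Some b \/ Y f = Some b.
Proof.
case: C_OM => _ _ _ C_elim XC YC XY Xe Ye.
have [Z ZC [Ze Zpos Zneg]] := C_elim X Y e XC YC XY Xe Ye.
by exists Z => //; split => // f [] => [/Zpos | /Zneg].
Qed.

Lemma circuit_elim_supp X Y e : X \in C -> Y \in C -> supp X != supp Y ->
  e \in supp X -> e \in supp Y ->
  exists2 Z, Z \in C & e \notin supp Z /\ supp Z \subset supp X :|: supp Y.
Proof.
move=> XC YC + eX eY.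
have [X' X'C [X'e <-]] := circuit_signed true XC eX.
have [Y' Y'C [Y'e <-]] := circuit_signed false YC eY.
move=> XY; have X'Y' : X' <> negv Y' by move=> eXY; rewrite eXY supp_negv eqxx in XY.
have [Z ZC [Ze ZXY]] := circuit_elim X'C Y'C X'Y' X'e Y'e.
exists Z => //; split; first by rewrite inE Ze.
apply/subsetP => f; rewrite !inE; case Zf: (Z f) => [b|] //= _.
by case: (ZXY f b Zf) => ->; rewrite ?orbT.
Qed.
End Circuits.

Section PMatroidExtension.
Variables (n : nat) (C : {set svec (Eq n)}).
Hypotheses (C_OM : is_OM C) (C_P : is_P_matroid (deletion_q C)).
Implicit Types (v w : vertex n) (X D : svec (Eq n)).

Lemma mem_Bv v b i : (Some (b, i) \in Bv v) = (b == v i).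
Proof. by apply/imsetP/eqP => [[j _ [-> ->]] // | ->]; exists i. Qed.

Lemma None_notin_Bv v : None \notin Bv v.
Proof. by apply/imsetP => -[]. Qed.

Definition restr X : svec (E2 n) := [ffun e => X (Some e)].

Lemma in_supp_restr X e : (e \in supp (restr X)) = (Some e \in supp X).
Proof. by rewrite !inE ffunE. Qed.

Lemma restr_deletion X : X \in C -> X None = None -> restr X \in deletion_q C.
Proof. by move=> XC XN; apply/imsetP; exists X; rewrite // inE XC XN. Qed.

Lemma not_sign_reversingP (X : svec (E2 n)) : ~ sign_reversing X ->
  exists i, [/\ (false, i) \in supp X, (true, i) \in supp X
              & X (false, i) != sopp (X (true, i))].
Proof.
move=> nsr; case: (boolP [exists i, [&& (false, i) \in supp X,
    (true, i) \in supp X & X (false, i) != sopp (X (true, i))]]).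
  by case/existsP => i /and3P; exists i.
move/existsPn => none; case: nsr => i Xf Xt; apply/eqP.
by move: (none i); rewrite Xf Xt negbK.
Qed.

(* A circuit supported in a complementary set would be vacuously sign-reversing. *)
Lemma Bv_dependent v X : X \in C -> ~~ (supp X \subset Bv v).
Proof.
move=> XC; apply/negP => XB.
have XN : X None = None.
  apply/eqP; apply: contraNT (None_notin_Bv v) => XN.
  by apply: (subsetP XB); rewrite inE.
case: C_P => _ _ /(_ _ (restr_deletion XC XN)) /not_sign_reversingP [i []].
by rewrite !in_supp_restr => /(subsetP XB) + /(subsetP XB); rewrite !mem_Bv => /eqP <-.
Qed.

Lemma flipv1 v i : flipv [set i] v i = ~~ v i.
Proof. by rewrite flipvE set11 addbT. Qed.

Lemma flipv1_neq v i j : j != i -> flipv [set i] v j = v j.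
Proof. by move=> ji; rewrite flipvE in_set1 (negbTE ji) addbF. Qed.

Lemma Bv_flip v i : Bv (flipv [set i] v) = Some (~~ v i, i) |: (Bv v :\ Some (v i, i)).
Proof.
apply/setP => -[[b j]|]; last first.
  by rewrite in_setU1 in_setD1 !(negbTE (None_notin_Bv _)) /=.
rewrite in_setU1 in_setD1 !mem_Bv !(inj_eq Some_inj) !xpair_eqE.
have [-> | ji] := eqVneq j i; last by rewrite flipv1_neq // !andbF.
by rewrite flipv1 !andbT; case: b (v i) => [] [].
Qed.

Lemma flip_supp v i (P A : {set Eq n}) :
  A \subset P :|: (Some (~~ v i, i) |: Bv v) -> Some (v i, i) \notin A ->
  A \subset P :|: Bv (flipv [set i] v).
Proof.
move=> AP vA; apply/subsetP => e eA; move/subsetP: AP => /(_ e eA).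
rewrite Bv_flip !in_setU !in_set1 in_setD1.
by have -> : e != Some (v i, i) by apply: contraNneq vA => <-.
Qed.

Lemma setU1_Bv_flip v i :
  Some (~~ flipv [set i] v i, i) |: Bv (flipv [set i] v) = Some (~~ v i, i) |: Bv v.
Proof. by rewrite Bv_flip flipv1 negbK setUCA setD1K // mem_Bv. Qed.

Definition has_fund_circuits v :=
  forall j, exists2 D, D \in C & supp D \subset Some (~~ v j, j) |: Bv v.

Lemma fund_circuit_supp v j D : D \in C ->
  supp D \subset Some (~~ v j, j) |: Bv v ->
  Some (~~ v j, j) \in supp D /\ Some (v j, j) \in supp D.
Proof.
move=> DC Dsub; split; apply: contraT => nD.
  case/negP: (Bv_dependent v DC); apply/subsetP => e eD.
  move/subsetP: Dsub => /(_ e eD); rewrite in_setU1 => /orP [/eqP ee | //].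
  by move: eD; rewrite ee (negbTE nD).
case/negP: (Bv_dependent (flipv [set j] v) DC).
by rewrite -[Bv _]set0U; apply: flip_supp nD; rewrite set0U.
Qed.

Lemma has_fund_circuits0 : has_fund_circuits [ffun => false].
Proof.
move=> j; case: C_P => _ /andP [_ /forallP /(_ ((true, j) |: Sset n)) maxS] _.
move: maxS; have -> /= : Sset n \proper (true, j) |: Sset n.
  rewrite properE subsetUr /=; apply/negP => /subsetP /(_ (true, j)).
  by rewrite setU11 => /(_ isT) /imsetP [i].
case/forall_inPn => _ /imsetP [X + ->]; rewrite inE => /andP [XC /eqP XN].
rewrite negbK => Xsub; exists X => //; apply/subsetP => -[e|] eX; last first.
  by rewrite inE XN in eX.
move: eX; rewrite -in_supp_restr => /(subsetP Xsub).
rewrite in_setU1 => /orP [/eqP -> | /imsetP [i _ ->]].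
  by rewrite ffunE setU11.
by rewrite in_setU1 mem_Bv !ffunE orbT.
Qed.

Lemma has_fund_circuits_flip v i :
  has_fund_circuits v -> has_fund_circuits (flipv [set i] v).
Proof.
move=> fcv j; have [Di DiC Disub] := fcv i.
have [-> | ji] := eqVneq j i; first by exists Di; rewrite // setU1_Bv_flip.
have [Dj DjC Djsub] := fcv j; rewrite flipv1_neq //.
have widen (A : {set Eq n}) : A \subset Some (~~ v j, j) |: Bv v ->
    A \subset Some (~~ v j, j) |: (Some (~~ v i, i) |: Bv v).
  by move=> AB; exact: subset_trans AB (setUS _ (subsetUr _ _)).
have [Dj_vi | Dj_vi] := boolP (Some (v i, i) \in supp Dj); last first.
  by exists Dj => //; apply: flip_supp Dj_vi; apply: widen.
have [Di_neg Di_pos] := fund_circuit_supp DiC Disub.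
have DjDi : supp Dj != supp Di.
  apply: contraTneq Di_neg => <-; apply/negP => /(subsetP Djsub).
  rewrite in_setU1 mem_Bv (inj_eq Some_inj) xpair_eqE [i == j]eq_sym (negbTE ji).
  by rewrite andbF; case: (v i).
have [Z ZC [Z_vi Zsub]] := circuit_elim_supp C_OM DjC DiC DjDi Dj_vi Di_pos.
exists Z => //; apply: flip_supp Z_vi; apply: subset_trans Zsub _.
by rewrite subUset widen //= (subset_trans Disub (subsetUr _ _)).
Qed.

Lemma has_fund_circuits_all v : has_fund_circuits v.
Proof. exact: flip_connected has_fund_circuits0 has_fund_circuits_flip v. Qed.

Definition has_q_circuit v : bool :=
  [exists X in C, (X None == Some true) && (supp X \subset None |: Bv v)].

Lemma has_q_circuit_flip v i : has_q_circuit v -> has_q_circuit (flipv [set i] v).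
Proof.
case/exists_inP => X XC /andP [/eqP XN Xsub].
suff [Z ZC [ZN Zsub]] : exists2 Z, Z \in C &
    None \in supp Z /\ supp Z \subset None |: Bv (flipv [set i] v).
  have [Z' Z'C [Z'N Z'Z]] := circuit_signed C_OM true ZC ZN.
  by apply/exists_inP; exists Z'; rewrite // Z'N Z'Z eqxx.
have widen : supp X \subset None |: (Some (~~ v i, i) |: Bv v).
  exact: subset_trans Xsub (setUS _ (subsetUr _ _)).
have [X_vi | X_vi] := boolP (Some (v i, i) \in supp X); last first.
  by exists X; rewrite // inE XN; split=> //; apply: flip_supp X_vi.
have [Di DiC Disub] := has_fund_circuits_all v i.
have [_ Di_pos] := fund_circuit_supp DiC Disub.
have XDi : supp X != supp Di.
  apply/negP => /eqP XDi; move/subsetP: Disub => /(_ None).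
  by rewrite -XDi inE XN in_setU1 (negbTE (None_notin_Bv v)) => /(_ isT).
have [Z ZC [Z_vi Zsub]] := circuit_elim_supp C_OM XC DiC XDi X_vi Di_pos.
have Zsub' : supp Z \subset None |: Bv (flipv [set i] v).
  apply: flip_supp Z_vi; apply: subset_trans Zsub _.
  by rewrite subUset widen (subset_trans Disub (subsetUr _ _)).
exists Z => //; split => //; apply: contraT => ZN.
case/negP: (Bv_dependent (flipv [set i] v) ZC); apply/subsetP => e eZ.
move/subsetP: Zsub' => /(_ e eZ); rewrite in_setU1 => /orP [/eqP eN | //].
by move: eZ; rewrite eN (negbTE ZN).
Qed.

Lemma has_q_circuit_const v w : has_q_circuit v = has_q_circuit w.
Proof.
suff imp v' w' : has_q_circuit v' -> has_q_circuit w' by apply/idP/idP; apply: imp.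
by move=> qv'; apply: (flip_connected (P := has_q_circuit) qv' has_q_circuit_flip).
Qed.

Local Notation qcirc v := (fund_circ C (Bv v) None).

Lemma qcircP v : has_q_circuit v ->
  [/\ qcirc v \in C, qcirc v None = Some true & supp (qcirc v) \subset None |: Bv v].
Proof.
rewrite /fund_circ; case: pickP => [X /andP [XC /andP [/eqP XN Xsub]] // | none].
by case/exists_inP => X XC XP; move: (none X); rewrite /= XC XP.
Qed.

Lemma qcirc0 v : ~~ has_q_circuit v -> qcirc v = [ffun => None].
Proof.
rewrite /fund_circ; case: pickP => [X /andP [XC XP] | //].
by case/exists_inP; exists X.
Qed.

Lemma qcirc_off v w i : v i != w i -> qcirc w (Some (v i, i)) = None.
Proof.
move=> vwi; have [/qcircP [_ _ Xsub] | /qcirc0 -> ] := boolP (has_q_circuit w).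
  apply/eqP; apply: contraT => Xvi; move/subsetP: Xsub => /(_ (Some (v i, i))).
  by rewrite inE Xvi in_setU1 mem_Bv (negbTE vwi) => /(_ isT).
by rewrite ffunE.
Qed.

Variable U : {set vertex n} -> vertex n -> 'I_n -> bool.
Hypothesis U_USO :
  forall v, is_USO_on (unor_dims C v) v (U (max_unor_face C v)).

Lemma separates_same_qcirc v w :
  v != w -> qcirc v = qcirc w -> separates (completed C U) v w.
Proof.
move=> vw Xvw.
have unor_off i : v i != w i -> PUSO C v i = None /\ PUSO C w i = None.
  by move=> vwi; rewrite /PUSO Xvw qcirc_off // -Xvw qcirc_off // eq_sym.
have unorE : unor_dims C w = unor_dims C v.
  apply/setP => j; rewrite !inE; have [vwj | vwj] := eqVneq (v j) (w j).
    by rewrite /PUSO -vwj Xvw.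
  by case: (unor_off j vwj) => -> ->.
have wf : w \in face (unor_dims C v) v.
  apply/faceP => j; rewrite inE; apply: contraNeq => wvj.
  by rewrite (unor_off j _).1 // eq_sym.
have [i vwi Uvw] := USO_on_separates (@U_USO v) (face_id _ _) wf vw.
exists i => //; rewrite /completed; case: (unor_off i vwi) => -> ->.
by rewrite /max_unor_face unorE (face_eq wf).
Qed.

Lemma separates_distinct_qcirc v w : has_q_circuit v -> has_q_circuit w ->
  qcirc v != qcirc w -> separates (completed C U) v w.
Proof.
move=> /qcircP [XC XN Xsub] /qcircP [YC YN Ysub] XY.
have nYC : negv (qcirc w) \in C by case: C_OM => _ C_neg _ _; apply: C_neg.
have nYN : negv (qcirc w) None = Some false by rewrite negvE YN.
have XnnY : qcirc v <> negv (negv (qcirc w)) by rewrite negvK; apply/eqP.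
have [Z ZC [ZN Zsign]] := circuit_elim C_OM XC nYC XnnY XN nYN.
have Zsub e : e \in supp Z -> e \in (None |: Bv v) :|: (None |: Bv w).
  rewrite inE; case Ze: (Z e) => [b|] // _; rewrite in_setU.
  case: (Zsign e b Ze) => [Xe | ]; first by rewrite (subsetP Xsub) // inE Xe.
  by rewrite negvE => Ye; rewrite (subsetP Ysub) ?orbT // inE; case: (qcirc w e) Ye.
case: C_P => _ _ /(_ _ (restr_deletion ZC ZN)) /not_sign_reversingP [i []].
rewrite !in_supp_restr !ffunE => Zf Zt Zft.
have vwi : v i != w i.
  move: (Zsub _ Zf) (Zsub _ Zt); rewrite !in_setU !in_set1 !mem_Bv /=.
  by case: (v i) (w i) => [] [].
have [Zv Zw Zvw] : [/\ Some (v i, i) \in supp Z, Some (w i, i) \in supp Z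
                     & Z (Some (v i, i)) != sopp (Z (Some (w i, i)))].
  by case: (v i) (w i) vwi => [] [] // _; rewrite sopp_eq_sym in Zft.
have [s Zv_s] : exists s, Z (Some (v i, i)) = Some s.
  by move: Zv; rewrite inE; case: (Z _) => // s _; exists s.
have [t Zw_t] : exists t, Z (Some (w i, i)) = Some t.
  by move: Zw; rewrite inE; case: (Z _) => // t _; exists t.
have Xv : qcirc v (Some (v i, i)) = Some s.
  by case: (Zsign _ _ Zv_s) => //; rewrite negvE qcirc_off.
have nYw : negv (qcirc w) (Some (w i, i)) = Some t.
  by case: (Zsign _ _ Zw_t) => //; rewrite qcirc_off // eq_sym.
have ts : t = s by move: Zvw; rewrite Zv_s Zw_t; case: s t {Zv_s Zw_t Xv nYw} => [] [].
exists i => //; rewrite /completed /PUSO Xv -negvE nYw ts /=.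
by case: (s).
Qed.
End PMatroidExtension.

Theorem mainTheorem5 (n : nat) (C : {set svec (Eq n)})
  (U : {set vertex n} -> vertex n -> 'I_n -> bool) :
  is_P_matroid_extension C ->
  (forall v : vertex n, is_USO_on (unor_dims C v) v (U (max_unor_face C v))) ->
  is_USO (completed C U).
Proof.
move=> [C_OM C_P] U_USO; apply: is_USO_separating => v w vw.
have [Xvw | Xvw] := eqVneq (fund_circ C (Bv v) None) (fund_circ C (Bv w) None).
  exact: separates_same_qcirc.
have qvw : has_q_circuit C v = has_q_circuit C w := has_q_circuit_const C_OM C_P v w.
have qv : has_q_circuit C v.
  by apply: contraNT Xvw => nqv; rewrite !qcirc0 // -qvw.
by apply: separates_distinct_qcirc; rewrite // -qvw.
Qed.
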